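(* Let $X$ be a real Banach space and $Y$ a closed subspace of $X$. The following are equivalent: (a) $Y$ has property-$(wU)$ in $X$. (b) For every proximinal closed subspace $Z\subseteq Y$, the subspace $Y/Z$ has property-$(wU)$ in $X/Z$. (c) For every $x^*\in X^*$ such that $x^*(y)=\|x^*\|$ for some $y\in S_Y$, one has $P_{Y^\perp}(x^* )=\{0\}$.
   Context: For a closed subspace $Y$ of $X$ and $y^*\in Y^*$, a norm-preserving (Hahn--Banach) extension of $y^*$ is an $x^*\in X^*$ with $x^*|_Y=y^*$ and $\|x^*\|=\|y^*\|$. $Y$ has property-$(wU)$ in $X$ if every $y^*\in Y^*$ that attains its norm on the unit sphere $S_Y$ (i.e. $\|y^*\|=y^*(y_0)$ for some $y_0\in S_Y$) has a unique norm-preserving extension to $X$. A subspace $Z$ of a normed space $W$ is proximinal if for each $w\in W$ the set $P_Z(w)=\{z\in Z:\|w-z\|=d(w,Z)\}$ is nonempty, where $d(w,Z)=\inf_{z\in Z}\|w-z\|$. $Y^\perp=\{x^*\in X^*: x^*|_Y=0\}$, and $P_{Y^\perp}(x^* )$ is the set of best approximations to $x^*$ from $Y^\perp$ in $X^*$. $Y/Z$ is regarded as a subspace of $X/Z$ with the quotient norm. *)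

From HB Require Import structures.
From mathcomp Require Import all_boot all_order all_algebra.
From mathcomp Require Import all_classical all_reals all_analysis.
Set Implicit Arguments. Unset Strict Implicit. Unset Printing Implicit Defensive.
Import Order.TTheory GRing.Theory Num.Theory.
Import numFieldNormedType.Exports.
Local Open Scope classical_set_scope.
Local Open Scope ring_scope.

Definition is_subspace (R : realType) (X : normedModType R) (Y : set X) : Prop :=
  Y 0 /\ forall (a : R) (x y : X), Y x -> Y y -> Y (a *: x + y).

Definition closed_subspace (R : realType) (X : normedModType R) (Y : set X) : Prop :=
  is_subspace Y /\ closed Y.

Definition dist_to (R : realType) (X : normedModType R) (x : X) (Z : set X) : R :=
  inf [set `|x - z| | z in Z].

Definition proximinal (R : realType) (X : normedModType R) (Z : set X) : Prop :=
  forall x : X, exists z, Z z /\ `|x - z| = dist_to x Z.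

(* Generic layer: X carrying a seminorm p.  With p = norm we get X itself; with
   p = dist_to . Z we get (a representative-level description of) the quotient
   X/Z.  A functional on the subspace Y (w.r.t. p) is represented by a function
   f : X -> R of which only the values on Y matter. *)
Definition linear_on (R : realType) (X : normedModType R) (Y : set X) (f : X -> R) : Prop :=
  forall (a : R) (x y : X), Y x -> Y y -> f (a *: x + y) = a * f x + f y.

Definition bounded_on (R : realType) (X : normedModType R) (p : X -> R) (Y : set X)
  (f : X -> R) : Prop :=
  exists C : R, forall y, Y y -> `|f y| <= C * p y.

Definition dual_on (R : realType) (X : normedModType R) (p : X -> R) (Y : set X)
  (f : X -> R) : Prop := linear_on Y f /\ bounded_on p Y f.

Definition opnorm (R : realType) (X : normedModType R) (p : X -> R) (Y : set X)
  (f : X -> R) : R :=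
  sup [set `|f y| | y in [set y | Y y /\ p y <= 1]].

Definition attains_norm (R : realType) (X : normedModType R) (p : X -> R) (Y : set X)
  (f : X -> R) : Prop :=
  exists y0, Y y0 /\ p y0 = 1 /\ f y0 = opnorm p Y f.

Definition np_extension (R : realType) (X : normedModType R) (p : X -> R) (Y : set X)
  (f g : X -> R) : Prop :=
  dual_on p setT g /\ (forall y, Y y -> g y = f y) /\ opnorm p setT g = opnorm p Y f.

Definition prop_wU (R : realType) (X : normedModType R) (p : X -> R) (Y : set X) : Prop :=
  forall f : X -> R, dual_on p Y f -> attains_norm p Y f ->
    (exists g, np_extension p Y f g) /\
    (forall g1 g2, np_extension p Y f g1 -> np_extension p Y f g2 -> g1 = g2).

Definition wU_in (R : realType) (X : normedModType R) (Y : set X) : Prop :=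
  prop_wU (fun x : X => `|x|) Y.

(* Y/Z has property-(wU) in X/Z, X/Z with the quotient norm x + Z |-> d(x, Z). *)
Definition wU_quot (R : realType) (X : normedModType R) (Y Z : set X) : Prop :=
  prop_wU (fun x : X => dist_to x Z) Y.

Definition dual (R : realType) (X : normedModType R) (f : X -> R) : Prop :=
  dual_on (fun x : X => `|x|) setT f.

Definition dnorm (R : realType) (X : normedModType R) (f : X -> R) : R :=
  opnorm (fun x : X => `|x|) setT f.

Definition annihilator (R : realType) (X : normedModType R) (Y : set X) : set (X -> R) :=
  [set g | dual g /\ forall y, Y y -> g y = 0].

Definition best_approx_annih (R : realType) (X : normedModType R) (Y : set X)
  (xs : X -> R) : set (X -> R) :=
  [set g | annihilator Y g /\
     dnorm (xs - g) = inf [set dnorm (xs - h) | h in annihilator Y]].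

From HB Require Import structures.
From mathcomp Require Import all_boot all_order all_algebra.
From mathcomp Require Import all_classical all_reals all_analysis.
From mathcomp Require Import ring lra.
Import Order.TTheory GRing.Theory Num.Theory.
Import numFieldNormedType.Exports.
Local Open Scope classical_set_scope.
Local Open Scope ring_scope.
Set Implicit Arguments. Unset Strict Implicit.

(* A functional vanishing on a proximinal subspace Z has the same norm and the
   same boundedness on Y as on Y/Z, since every coset meets Z in a
   norm-minimising representative; hence (a) gives (b), and Z = {0} gives the
   converse.  If phi in X^* attains its norm at y in S_Y, then for h in Y^perp
   ||phi - h|| >= (phi - h)(y) = ||phi||, so d(phi, Y^perp) = ||phi|| and h lies
   in P_{Y^perp}(phi) exactly when phi - h is again a norm-preserving extension
   of phi|_Y.  This identifies uniqueness of extensions in (a) with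
   P_{Y^perp}(phi) = {0} in (c); existence of extensions is the Hahn-Banach
   theorem, proved by Zorn's lemma on dominated linear graphs in X * R. *)

Section LinearOn.
Variables (R : realType) (X : normedModType R).
Implicit Types (W : set X) (f : X -> R).

Lemma subspaceT : is_subspace [set: X].
Proof. by []. Qed.

Lemma subspaceZ W a x : is_subspace W -> W x -> W (a *: x).
Proof. by move=> [W0 WD] Wx; have := WD a x 0 Wx W0; rewrite addr0. Qed.

Lemma subspaceB W x y : is_subspace W -> W x -> W y -> W (x - y).
Proof. by move=> [_ WD] Wx Wy; have := WD (-1) y x Wy Wx; rewrite scaleN1r addrC. Qed.

Lemma linear_on0 W f : W 0 -> linear_on W f -> f 0 = 0.
Proof. by move=> W0 lf; have := lf 1 0 0 W0 W0; rewrite scale1r addr0 mul1r; lra. Qed.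

Lemma linear_onZ W f a x : W 0 -> linear_on W f -> W x -> f (a *: x) = a * f x.
Proof. by move=> W0 lf Wx; have := lf a x 0 Wx W0; rewrite !addr0 (linear_on0 W0 lf) addr0. Qed.

Lemma linear_onB W f x y : linear_on W f -> W x -> W y -> f (x - y) = f x - f y.
Proof.
by move=> lf Wx Wy; have := lf (-1) y x Wy Wx; rewrite scaleN1r mulN1r addrC => ->; rewrite addrC.
Qed.

End LinearOn.

Section HahnBanach.
Variables (R : realType) (X : normedModType R) (p : X -> R).
Hypothesis p_add : forall x y, p (x + y) <= p x + p y.
Hypothesis p_scale : forall (t : R) x, 0 < t -> p (t *: x) = t * p x.

Lemma sublinear0 : p 0 = 0.
Proof. by have := p_scale 0 (ltr0n R 2); rewrite scaler0; lra. Qed.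

Definition linear_graph (G : set (X * R)) :=
  forall a u v, G u -> G v -> G (a *: u.1 + v.1, a * u.2 + v.2).

Definition dominated_graph (G : set (X * R)) := forall u, G u -> u.2 <= p u.1.

Definition graph_adjoin (G : set (X * R)) (x0 : X) (c : R) : set (X * R) :=
  [set u | exists d r t, G (d, r) /\ u = (d + t *: x0, r + t * c)].

Implicit Types G : set (X * R).

Lemma dominated_graph_functional G x r s :
  linear_graph G -> dominated_graph G -> G (x, r) -> G (x, s) -> r = s.
Proof.
move=> linG domG Gr Gs.
have := domG _ (linG (-1) _ _ Gr Gs); have := domG _ (linG (-1) _ _ Gs Gr).
by rewrite /= scaleN1r addNr sublinear0; lra.
Qed.

Lemma linear_graph_adjoin G x0 c : linear_graph G -> linear_graph (graph_adjoin G x0 c).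
Proof.
move=> linG a _ _ [d1 [r1 [t1 [G1 ->]]]] [d2 [r2 [t2 [G2 ->]]]] /=.
exists (a *: d1 + d2), (a * r1 + r2), (a * t1 + t2); split; first exact: linG G1 G2.
by congr pair; [rewrite scalerDr scalerDl scalerA addrACA | ring].
Qed.

Lemma dominated_adjoin_pos G x0 c d r t :
  linear_graph G -> G (0, 0) -> (forall e s, G (e, s) -> c <= p (e + x0) - s) ->
  G (d, r) -> 0 < t -> r + t * c <= p (d + t *: x0).
Proof.
move=> linG G00 cle Gdr t0.
have Gt : G (t^-1 *: d, t^-1 * r) by have := linG t^-1 _ _ Gdr G00; rewrite /= !addr0.
have -> : d + t *: x0 = t *: (t^-1 *: d + x0).
  by rewrite scalerDr scalerA mulfV ?gt_eqF // scale1r.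
have -> : r = t * (t^-1 * r) by rewrite mulrA mulfV ?gt_eqF // mul1r.
rewrite p_scale //; have := cle _ _ Gt; set r' := t^-1 * r; set P := p _; nra.
Qed.

Lemma dominated_graph_gap G x0 :
  linear_graph G -> dominated_graph G -> G (0, 0) ->
  exists c, (forall d r, G (d, r) -> r - p (d - x0) <= c) /\
            (forall e s, G (e, s) -> c <= p (e + x0) - s).
Proof.
move=> linG domG G00.
have gap d r e s : G (d, r) -> G (e, s) -> r - p (d - x0) <= p (e + x0) - s.
  move=> Gdr Ges; have := domG _ (linG 1 _ _ Gdr Ges); rewrite /= scale1r mul1r.
  have -> : d + e = (d - x0) + (e + x0) by rewrite addrACA addNr addr0.
  by have := p_add (d - x0) (e + x0); lra.
exists (sup [set u.2 - p (u.1 - x0) | u in G]); split.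
- move=> d r Gdr; apply: ub_le_sup; last by exists (d, r).
  by exists (p (0 + x0) - 0) => _ [[d' r'] Gdr' <-]; exact: gap.
- move=> e s Ges; apply: ge_sup; first by exists (0 - p (0 - x0)), (0, 0).
  by move=> _ [[d r] Gdr <-]; exact: gap.
Qed.

Lemma dominated_graph_adjoin G x0 c :
  linear_graph G -> dominated_graph G -> G (0, 0) ->
  (forall d r, G (d, r) -> r - p (d - x0) <= c) ->
  (forall e s, G (e, s) -> c <= p (e + x0) - s) ->
  dominated_graph (graph_adjoin G x0 c).
Proof.
move=> linG domG G00 c_ge c_le _ [d [r [t [Gdr ->]]]] /=.
have [t0|t0|->] := ltrgtP t 0.
- have -> : d + t *: x0 = d + (- t) *: (- x0) by rewrite scalerN scaleNr opprK.
  have -> : r + t * c = r + (- t) * (- c) by rewrite mulrNN.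
  apply: (dominated_adjoin_pos linG G00 _ Gdr); last by rewrite oppr_gt0.
  by move=> e s Ges; have := c_ge _ _ Ges; lra.
- exact: (dominated_adjoin_pos linG G00 c_le Gdr).
- by rewrite scale0r mul0r !addr0; exact: (domG _ Gdr).
Qed.

Lemma linear_graph_bigcup (F : set (set (X * R))) :
  total_on F subset -> (forall G, F G -> linear_graph G) ->
  linear_graph (\bigcup_(G in F) G).
Proof.
move=> Ftot Flin a u v [G1 FG1 G1u] [G2 FG2 G2v].
have [G12|G21] := Ftot _ _ FG1 FG2.
- by exists G2 => //; apply: Flin => //; exact: G12.
- by exists G1 => //; apply: Flin => //; exact: G21.
Qed.

Lemma maximal_dominated_graph_total G :
  linear_graph G -> dominated_graph G -> G (0, 0) ->
  (forall G', G `<` G' -> linear_graph G' -> dominated_graph G' -> False) ->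
  forall x, exists r, G (x, r).
Proof.
move=> linG domG G00 Gmax x0; apply: contrapT => Gx0.
have [c [c_ge c_le]] := dominated_graph_gap x0 linG domG G00.
apply: (Gmax (graph_adjoin G x0 c)).
- split; first by move=> [d r] Gdr; exists d, r, 0; rewrite scale0r mul0r !addr0.
  move=> /(_ (x0, c)) sub; apply: Gx0; exists c; apply: sub.
  by exists 0, 0, 1; rewrite scale1r mul1r !add0r.
- exact: linear_graph_adjoin.
- exact: dominated_graph_adjoin.
Qed.

Theorem hahn_banach (Y : set X) (f : X -> R) :
  is_subspace Y -> linear_on Y f -> (forall y, Y y -> f y <= p y) ->
  exists g : X -> R,
    [/\ linear_on setT g, forall x, g x <= p x & forall y, Y y -> g y = f y].
Proof.
move=> [Y0 YD] lf f_le.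
pose Gf : set (X * R) := [set u | Y u.1 /\ u.2 = f u.1].
(* Admitting the empty graph makes the union of the empty chain admissible. *)
pose P G := [/\ linear_graph G, dominated_graph G & G = set0 \/ Gf `<=` G].
have PGf : P Gf.
  split; last by right.
  - move=> a [x r] [x' r'] [/= Yx ->] [/= Yx' ->]; split => /=; [exact: YD | by rewrite lf].
  - by move=> [x r] [/= Yx ->]; exact: f_le.
have [G [[linG domG GfG] Gmax]] : exists G, P G /\ forall G', G `<` G' -> ~ P G'.
  apply: Zorn_bigcup => F FP Ftot; split.
  - by apply: linear_graph_bigcup => // G /FP [].
  - by move=> u [G /FP [_ domG _]]; exact: domG.
  - have [[G FG GfG]|noG] := pselect (exists2 G, F G & Gf `<=` G).
      by right => u /GfG Gu; exists G.
    left; apply/seteqP; split => // u [G FG Gu].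
    have [_ _ [G0|GfG]] := FP _ FG; first by rewrite G0 in Gu.
    by exfalso; apply: noG; exists G.
have {}GfG : Gf `<=` G.
  case: GfG => // G0; exfalso; apply: (Gmax Gf) => //; rewrite G0; split => //.
  by move=> /(_ (0, f 0)) /(_ (conj Y0 erefl)).
have G00 : G (0, 0) by rewrite -(linear_on0 Y0 lf); apply: GfG.
have Gtot := maximal_dominated_graph_total linG domG G00 (fun G' GG' linG' domG' =>
  Gmax G' GG' (And3 linG' domG' (or_intror (subset_trans GfG (properW GG'))))).
pose g x := xget 0 [set r | G (x, r)].
have Gg x : G (x, g x) by exact: (xgetPex 0 (Gtot x)).
exists g; split.
- move=> a x y _ _; apply: (dominated_graph_functional linG domG (Gg _)).
  exact: linG (Gg x) (Gg y).
- by move=> x; exact: domG (Gg x).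
- by move=> y Yy; apply: (dominated_graph_functional linG domG (Gg y)); apply: GfG.
Qed.

End HahnBanach.

Section OperatorNorm.
Variables (R : realType) (X : normedModType R).
Implicit Types (W : set X) (f : X -> R).
Local Notation nrm := (fun x : X => `|x|).

Lemma opnorm_ub W f y :
  bounded_on nrm W f -> W y -> `|y| <= 1 -> `|f y| <= opnorm nrm W f.
Proof.
move=> [C bC] Wy y1; apply: ub_le_sup; last by exists y.
exists `|C| => _ [x [Wx x1] <-]; have := bC x Wx.
by have := ler_norm C; have := normr_ge0 x; have := normr_ge0 C; nra.
Qed.

Lemma opnorm_le W f M :
  W 0 -> (forall y, W y -> `|y| <= 1 -> `|f y| <= M) -> opnorm nrm W f <= M.
Proof.
move=> W0 f_le; apply: ge_sup; first by exists `|f 0|; exists 0 => //; split; rewrite ?normr0.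
by move=> _ [y [Wy y1] <-]; exact: f_le.
Qed.

Lemma opnorm_ge0 W f : bounded_on nrm W f -> W 0 -> 0 <= opnorm nrm W f.
Proof. by move=> bf W0; apply: le_trans (opnorm_ub bf W0 _); rewrite ?normr0. Qed.

Lemma opnorm_mul_ub W f y : is_subspace W -> linear_on W f -> bounded_on nrm W f ->
  W y -> `|f y| <= opnorm nrm W f * `|y|.
Proof.
move=> sW lf bf Wy; have [->|y0] := eqVneq y 0.
  by rewrite (linear_on0 sW.1 lf) !normr0 mulr0.
have ny : 0 < `|y| by rewrite normr_gt0.
have := opnorm_ub bf (subspaceZ `|y|^-1 sW Wy).
rewrite normrZ normfV normr_id mulVf ?gt_eqF // lexx (linear_onZ _ sW.1 lf Wy).
by rewrite normrM normfV normr_id ler_pdivrMl // mulrC => ->.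
Qed.

Lemma np_extension_exists Y f :
  is_subspace Y -> dual_on nrm Y f -> exists g, np_extension nrm Y f g.
Proof.
move=> sY [lf bf]; set M := opnorm nrm Y f.
have M0 : 0 <= M := opnorm_ge0 bf sY.1.
have [|||g [lg g_le gf]] := @hahn_banach _ _ (fun x => M * `|x|) _ _ Y f sY lf.
- by move=> x y; rewrite -mulrDr ler_wpM2l // ler_normD.
- by move=> t x t0; rewrite normrZ gtr0_norm // mulrCA.
- by move=> y Yy; apply: le_trans (ler_norm _) (opnorm_mul_ub sY lf bf Yy).
have g_bd x : `|g x| <= M * `|x|.
  rewrite ler_norml g_le andbT; have := g_le (- x).
  by rewrite normrN -scaleN1r (linear_onZ _ I lg I) mulN1r; lra.
have bg : bounded_on nrm setT g by exists M => x _; exact: g_bd.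
exists g; split; [by [] | split => //].
apply/le_anti/andP; split.
- apply: opnorm_le => // x _ x1; apply: le_trans (g_bd x) _.
  by rewrite -[leRHS]mulr1 ler_wpM2l.
- by apply: opnorm_le => [|y Yy y1]; [exact: sY.1 | rewrite -gf //; exact: opnorm_ub].
Qed.

End OperatorNorm.

Section Quotient.
Variables (R : realType) (X : normedModType R) (Z : set X).
Hypotheses (Z0 : Z 0) (Zprox : proximinal Z).
Implicit Types (W Y : set X) (f g h : X -> R).
Local Notation nrm := (fun x : X => `|x|).
Local Notation distZ := (fun x : X => dist_to x Z).

Lemma dist_to_le x z : Z z -> dist_to x Z <= `|x - z|.
Proof. by move=> Zz; apply: ge_inf; [exists 0 => _ [? _ <-] | exists z]. Qed.

Lemma dist_to_ge0 x : 0 <= dist_to x Z.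
Proof. by apply: lb_le_inf; [exists `|x - 0|, 0 | move=> _ [z _ <-]]. Qed.

Lemma dist_to_mem z : Z z -> dist_to z Z = 0.
Proof.
move=> Zz; apply/le_anti; rewrite dist_to_ge0 andbT.
by have := dist_to_le z Zz; rewrite subrr normr0.
Qed.

Lemma bounded_on_dist_to_vanish W h :
  Z `<=` W -> bounded_on distZ W h -> forall z, Z z -> h z = 0.
Proof.
move=> ZW [C bC] z Zz; have := bC z (ZW _ Zz).
by rewrite /= dist_to_mem // mulr0 normr_le0 => /eqP.
Qed.

Lemma bounded_on_dist_to_norm W h : bounded_on distZ W h -> bounded_on nrm W h.
Proof.
move=> [C bC]; exists `|C| => y Wy; have := bC y Wy.
have := dist_to_le y Z0; rewrite subr0 => d_le; have := dist_to_ge0 y.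
by have := ler_norm C; have := normr_ge0 C; nra.
Qed.

Section Vanishing.
Variables (W : set X) (h : X -> R).
Hypotheses (sW : is_subspace W) (ZW : Z `<=` W) (lh : linear_on W h).
Hypothesis hZ : forall z, Z z -> h z = 0.

Lemma best_approx_shift y : W y -> exists y', [/\ W y', `|y'| = dist_to y Z & h y' = h y].
Proof.
move=> Wy; have [z [Zz yz]] := Zprox y; exists (y - z); split => //.
  exact: subspaceB (ZW Zz).
by rewrite (linear_onB lh Wy (ZW Zz)) (hZ Zz) subr0.
Qed.

Lemma bounded_on_norm_dist_to : bounded_on nrm W h -> bounded_on distZ W h.
Proof.
move=> [C bC]; exists C => y Wy.
by have [y' [Wy' <- <-]] := best_approx_shift Wy; exact: bC.
Qed.

Lemma opnorm_dist_to : opnorm distZ W h = opnorm nrm W h.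
Proof.
congr sup; apply/seteqP; split => _ [y [Wy y1] <-].
- by have [y' [Wy' y'y <-]] := best_approx_shift Wy; exists y' => //; rewrite /= y'y.
- by exists y => //; split => //; apply: le_trans y1; have := dist_to_le y Z0; rewrite subr0.
Qed.

End Vanishing.

Lemma np_extension_dist_toE Y f g :
  is_subspace Y -> Z `<=` Y -> linear_on Y f -> (forall z, Z z -> f z = 0) ->
  np_extension distZ Y f g <-> np_extension nrm Y f g.
Proof.
move=> sY ZY lf fZ; rewrite /np_extension (opnorm_dist_to sY ZY lf fZ).
split=> -[[lg bg] [gf ng]].
- have gZ := bounded_on_dist_to_vanish (@subsetT _ Z) bg.
  rewrite -(opnorm_dist_to (@subspaceT _ X) (subsetT Z) lg gZ); split=> //.
  by split=> //; exact: bounded_on_dist_to_norm.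
- have gZ z : Z z -> g z = 0 by move=> Zz; rewrite gf ?fZ //; exact: ZY.
  rewrite (opnorm_dist_to (@subspaceT _ X) (subsetT Z) lg gZ); split=> //.
  by split=> //; exact: bounded_on_norm_dist_to.
Qed.

Lemma wU_in_quot Y : is_subspace Y -> Z `<=` Y -> wU_in Y -> wU_quot Y Z.
Proof.
move=> sY ZY wUY f [lf bf] [y0 [Yy0 [y01 fy0]]].
have fZ := bounded_on_dist_to_vanish ZY bf.
have extE g := np_extension_dist_toE g sY ZY lf fZ.
have att : attains_norm nrm Y f.
  have [y [Yy yy0 fy]] := best_approx_shift sY ZY lf fZ Yy0.
  by exists y; rewrite yy0 fy y01 fy0 (opnorm_dist_to sY ZY lf fZ).
have [[g ext] uniq] := wUY f (conj lf (bounded_on_dist_to_norm bf)) att.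
split; first by exists g; apply/extE.
by move=> g1 g2 /extE e1 /extE e2; exact: uniq.
Qed.

End Quotient.

Lemma dist_to_origin (R : realType) (X : normedModType R) (x : X) :
  dist_to x [set 0] = `|x|.
Proof. by rewrite /dist_to image_set1 subr0 inf1. Qed.

Lemma wU_in_of_quot (R : realType) (X : normedModType R) (Y : set X) :
  Y 0 ->
  (forall Z : set X, closed_subspace Z -> Z `<=` Y -> proximinal Z -> wU_quot Y Z) ->
  wU_in Y.
Proof.
move=> Y0 wUq; have := wUq [set 0]; rewrite /wU_quot.
have -> : (fun x : X => dist_to x [set 0]) = (fun x : X => `|x|).
  by apply/funext => x; exact: dist_to_origin.
apply.
- split; last exact: (accessible_closed_set1 (hausdorff_accessible (@norm_hausdorff _ _))).
  by split=> // a x y -> ->; rewrite scaler0 addr0.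
- by move=> _ ->.
- by move=> x; exists 0; rewrite dist_to_origin subr0.
Qed.

Section Annihilator.
Variables (R : realType) (X : normedModType R) (Y : set X).
Hypothesis sY : is_subspace Y.
Implicit Types (f g h xs : X -> R).
Local Notation nrm := (fun x : X => `|x|).
Local Notation norm_attaining xs := (exists y, Y y /\ `|y| = 1 /\ xs y = dnorm xs).

Lemma dual_sub f g : dual f -> dual g -> dual (f - g).
Proof.
move=> [lf [C bf]] [lg [D bg]]; split.
  by move=> a x y _ _; rewrite !fctE lf // lg //; ring.
exists (C + D) => x _; have := bf x I; have := bg x I.
by rewrite !fctE mulrDl; have := ler_normB (f x) (g x); lra.
Qed.

Lemma dual_bounded_on W xs : dual xs -> bounded_on nrm W xs.
Proof. by move=> [_ [C bC]]; exists C => x _; exact: bC. Qed.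

Lemma opnorm_norm_attaining xs :
  dual xs -> norm_attaining xs -> opnorm nrm Y xs = dnorm xs.
Proof.
move=> dxs [y [Yy [y1 xsy]]]; apply/le_anti/andP; split.
  by apply: opnorm_le sY.1 _ => x _ x1; exact: opnorm_ub dxs.2 I x1.
by rewrite -xsy (le_trans (ler_norm _)) // opnorm_ub ?y1 //; exact: dual_bounded_on.
Qed.

Lemma annihilator0 : annihilator Y 0.
Proof.
split=> //; split; first by move=> a x y _ _; rewrite mulr0 addr0.
by exists 0 => x _; rewrite normr0 mul0r.
Qed.

Lemma dnorm_le_sub_annihilator xs h :
  dual xs -> norm_attaining xs -> annihilator Y h -> dnorm xs <= dnorm (xs - h).
Proof.
move=> dxs [y [Yy [y1 xsy]]] [dh hY].
have -> : dnorm xs = xs y - h y by rewrite hY ?subr0.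
apply: le_trans (ler_norm _) _; apply: (opnorm_ub (f := xs - h)) => //; [exact: (dual_sub dxs dh).2 | by rewrite y1].
Qed.

Lemma dist_annihilator_norm_attaining xs :
  dual xs -> norm_attaining xs ->
  inf [set dnorm (xs - h) | h in annihilator Y] = dnorm xs.
Proof.
move=> dxs att; apply/le_anti/andP; split.
  apply: ge_inf; last by exists 0; [exact: annihilator0 | rewrite subr0].
  by exists (dnorm xs) => _ [h Yh <-]; exact: dnorm_le_sub_annihilator.
apply: lb_le_inf; first by exists (dnorm (xs - 0)), 0; [exact: annihilator0 |].
by move=> _ [h Yh <-]; exact: dnorm_le_sub_annihilator.
Qed.

Lemma np_extension_norm_attaining f g :
  attains_norm nrm Y f -> np_extension nrm Y f g -> norm_attaining g.
Proof.
move=> [y0 [Yy0 [y01 fy0]]] [_ [gf ng]].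
by exists y0; split=> //; split=> //; rewrite gf // fy0 /dnorm ng.
Qed.

Lemma best_approx_np_extension f g h :
  attains_norm nrm Y f -> np_extension nrm Y f g ->
  best_approx_annih Y g h <-> np_extension nrm Y f (g - h).
Proof.
move=> attf extg; have [dg [gf ng]] := extg.
have attg := np_extension_norm_attaining attf extg.
rewrite /best_approx_annih /= (dist_annihilator_norm_attaining dg attg) /dnorm ng.
split=> [[[dh hY] ngh] | [dgh [ghf ngh]]].
- split; first exact: dual_sub.
  by split=> // y Yy; rewrite -gf // -[RHS]subr0 -(hY y Yy).
- have dh : dual h by rewrite -[h](subKr g); exact: dual_sub.
  split=> //; split=> // y Yy; have := ghf y Yy; rewrite -gf //.
  by move=> /eqP; rewrite -subr_eq0 addrC addKr oppr_eq0 => /eqP.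
Qed.

Lemma wU_in_best_approx0 xs :
  wU_in Y -> dual xs -> norm_attaining xs -> best_approx_annih Y xs = [set 0].
Proof.
move=> wUY dxs att; have nY := opnorm_norm_attaining dxs att.
have attY : attains_norm nrm Y xs.
  by case: att => y [Yy [y1 xsy]]; exists y; rewrite nY.
have extxs : np_extension nrm Y xs xs by split=> //; split=> //; rewrite nY.
have dY : dual_on nrm Y xs.
  by split; [move=> a x y _ _; exact: dxs.1 | exact: dual_bounded_on].
have [_ uniq] := wUY xs dY attY.
apply/seteqP; split=> h.
- move/(best_approx_np_extension _ attY extxs)/(uniq _ _ extxs) => xsh.
  by rewrite /= -[h](subKr xs) -xsh subrr.
- by move=> /= ->; apply/(best_approx_np_extension _ attY extxs); rewrite subr0.
Qed.

Lemma best_approx0_wU_in :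
  (forall xs, dual xs -> norm_attaining xs -> best_approx_annih Y xs = [set 0]) ->
  wU_in Y.
Proof.
move=> best0 f df attf; split; first exact: np_extension_exists.
move=> g1 g2 e1 e2; apply/subr0_eq.
have : best_approx_annih Y g1 (g1 - g2).
  by apply/(best_approx_np_extension _ attf e1); rewrite subKr.
by rewrite (best0 g1 e1.1 (np_extension_norm_attaining attf e1)).
Qed.

End Annihilator.

Unset Implicit Arguments. Set Strict Implicit.

Theorem theorem2p1 (R : realType) (X : completeNormedModType R) (Y : set X)
  (hY : closed_subspace Y) :
  [/\ (wU_in Y <->
        (forall Z : set X, closed_subspace Z -> Z `<=` Y -> proximinal Z ->
           wU_quot Y Z)),
      ((forall Z : set X, closed_subspace Z -> Z `<=` Y -> proximinal Z ->
           wU_quot Y Z) <->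
        (forall xs : X -> R, dual xs ->
           (exists y, Y y /\ `|y| = 1 /\ xs y = dnorm xs) ->
           best_approx_annih Y xs = [set (fun _ : X => 0 : R)]))
    & (wU_in Y <->
        (forall xs : X -> R, dual xs ->
           (exists y, Y y /\ `|y| = 1 /\ xs y = dnorm xs) ->
           best_approx_annih Y xs = [set (fun _ : X => 0 : R)]))].
Proof.
have [sY _] := hY.
have AB : wU_in Y <-> forall Z : set X, closed_subspace Z -> Z `<=` Y -> proximinal Z ->
    wU_quot Y Z.
  split=> [wUY Z [[Z0 _] _] ZY Zprox | ]; first exact: wU_in_quot.
  exact: wU_in_of_quot sY.1.
have AC : wU_in Y <-> forall xs : X -> R, dual xs ->
    (exists y, Y y /\ `|y| = 1 /\ xs y = dnorm xs) ->
    best_approx_annih Y xs = [set (fun _ : X => 0 : R)].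
  by split=> [wUY xs | ]; [exact: wU_in_best_approx0 | exact: best_approx0_wU_in].
by split=> //; split=> H; [apply/AC/AB | apply/AB/AC].
Qed.
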